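(* Let the problem data, partition, residuals, augmented Lagrangian and primal updates be as described in the context. Let initial values $X^0_i\in[-u,u]$, $Z^0\in[-u,u]$, $Y^{c,0}_i\in[0,u^c_{Y_i}]$, $\mu^{c,0}_i\in[0,u^c_{\mu_i}]$ be given, and generate the primal sequences by (U1)–(U3) and the dual sequences by the descent rule (D). Then for every $K\in\mathbb N$, $$ L^0\ge L^K+\sum_{i=1}^N\sum_{k=1}^K\sum_{c\in\mathcal C}\sum_j \alpha^{c,k}_{i,j}\,\big|(r^{c,k}_i)_j\big|^2+\sum_{k=0}^{K-1}P^k+\sum_{i=1}^N\sum_{k=0}^{K-1}\sum_{l=1}^M\Big({}^{1}\sigma^k_{i,l}\|X^k_{i,l}-X^{k+1}_{i,l}\|_1+U^k_{i,l}\Big), $$ where $r^{c,k}_i:=r^c_i(X^k_i,Z^k,Y^{c,k}_i)$, $L^k:=\sum_i L_i(X^k_i,Z^k,(Y^{c,k}_i)_c,(\mu^{c,k}_i)_c)$, $$ P^k:=\sum_{i=1}^N\Big[\sum_{l}{}^{2}\sigma^k_{i,l}\|X^{k+1}_{i,l}-X^k_{i,l}\|^2+\rho_i\|X^{k+1}_i-X^k_i\|^2+(\tau^k+\rho_i)\|Z^{k+1}-Z^k\|^2+\sum_{c\in\mathcal C}\Big(\gamma^{c,k}_i+\tfrac{\rho_i}{2}\Big)\|Y^{c,k+1}_i-Y^{c,k}_i\|^2 $$ $$ \qquad+\tfrac{\rho_i}{2}\sum_{l}\Big(\|F_i(X^{k+1,k+1}_{i,l})-F_i(X^{k+1,k}_{i,l})\|^2+\|G_{i,l}(X^{k+1}_{i,l}-X^k_{i,l})\|^2+2\|H_{i,l}(X^{k+1}_{i,l}-X^k_{i,l})\|^2\Big)\Big],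 $$ and $$ U^k_{i,l}:=\Big\langle \mu^{F,k}_i+\rho_i\big(F_i(X^{k+1,k+1}_{i,l})+Y^{F,k}_i\big),\ F_i(X^{k+1,k}_{i,l})-F_i(X^{k+1,k+1}_{i,l})-\big(\nabla_{X_{i,l}}F_i(X^{k+1,k+1}_{i,l})\big)^{\!T}\!\!\cdot(X^k_{i,l}-X^{k+1}_{i,l})\Big\rangle, $$ the last product denoting the vector whose $j$-th entry is $(X^k_{i,l}-X^{k+1}_{i,l})^T\nabla_{X_{i,l}}(F_i)_j(X^{k+1,k+1}_{i,l})$.
   Context: Problem data. $n,N,M\in\mathbb N$. $u\in\mathbb R^n$ with $u>0$. $f(Z)=\langle f_0,Z\rangle$ is linear on $\mathbb R^n$. For each $i=1,\dots,N$: $F_i:\mathbb R^n\to\mathbb R^{p_i}$ has convex quadratic components (each component of the form $a(Z)+c(Z)^2$ or $c(Z)^2-a(Z)b(Z)$ with $a,b,c$ affine, convex on $[-u,u]$); $G_i:\mathbb R^n\to\mathbb R^{q_i}$ and $H_i:\mathbb R^n\to\mathbb R^{s_i}$ are affine. Vectors in $\mathbb R^n$ are partitioned into $M$ disjoint subvectors $Z=(Z_1,\dots,Z_M)$, $Z_l\in\mathbb R^{m_l}$, $\sum_l m_l=n$, the same partition for every $X_i\in\mathbb R^n$; correspondingly $u=(u_1,\dots,u_M)$, $f(Z)=\sum_l\langle f_l,Z_l\rangle$, $G_i(Z)=\sum_l G_{i,l}Z_l+G_{i,0}$, $H_i(Z)=\sum_l H_{i,l}Z_l+H_{i,0}$ with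 matrices $G_{i,l},H_{i,l}$. Slack variables and residuals. Let $\mathcal C=\{pX,nX,F,G,pH,nH\}$. For each $i$ there are slack vectors $Y^{pX}_i,Y^{nX}_i\in\mathbb R^n$, $Y^F_i\in\mathbb R^{p_i}$, $Y^G_i\in\mathbb R^{q_i}$, $Y^{pH}_i,Y^{nH}_i\in\mathbb R^{s_i}$, with given positive upper bound vectors $u^c_{Y_i}$ (slack boxes $[0,u^c_{Y_i}]$), and dual vectors $\mu^c_i$ of the same sizes. Residuals: $r^{pX}_i=X_i-Z+Y^{pX}_i$, $r^{nX}_i=Z-X_i+Y^{nX}_i$, $r^F_i=F_i(X_i)+Y^F_i$, $r^G_i=G_i(X_i)+Y^G_i$, $r^{pH}_i=H_i(X_i)+Y^{pH}_i$, $r^{nH}_i=-H_i(X_i)+Y^{nH}_i$. With $\rho_i>0$, the augmented Lagrangian of block $i$ is $$L_i=f(X_i)+\sum_{c\in\mathcal C}\langle\mu^c_i,r^c_i\rangle+\frac{\rho_i}{2}\sum_{c\in\mathcal C}\|r^c_i\|^2.$$ Gauss–Seidel notation: $X^{k+1,k}_{i,l}:=(X^{k+1}_{i,1},\dots,X^{k+1}_{i,l-1},X^k_{i,l},X^k_{i,l+1},\dots,X^k_{i,M})$ and $X^{k+1,k+1}_{i,l}:=(X^{k+1}_{i,1},\dots,X^{k+1}_{i,l},X^k_{i,l+1},\dots,X^k_{i,M})$. Parameters: ${}^{1}\sigma^k_{i,l}\ge0$, ${}^{2}\sigma^k_{i,l}>0$, $\tau^k>0$, $\gamma^{c,k}_i>0$.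 Updates at iteration $k$ (for each $i$): (U1) For $l=1,\dots,M$ in order, $X^{k+1}_{i,l}$ is the minimizer over $X_{i,l}\in[-u_l,u_l]$ of $L_i\big((X^{k+1}_{i,1},\dots,X^{k+1}_{i,l-1},X_{i,l},X^k_{i,l+1},\dots,X^k_{i,M}),Z^k,(Y^{c,k}_i)_c,(\mu^{c,k}_i)_c\big)+{}^{1}\sigma^k_{i,l}\|X_{i,l}-X^k_{i,l}\|_1+\tfrac{{}^{2}\sigma^k_{i,l}}{2}\|X_{i,l}-X^k_{i,l}\|^2$. (U2) $Z^{k+1}$ is the minimizer over $Z\in[-u,u]$ of $\sum_{i=1}^N\Big(\langle\mu^{pX,k}_i,X^{k+1}_i-Z+Y^{pX,k}_i\rangle+\langle\mu^{nX,k}_i,Z-X^{k+1}_i+Y^{nX,k}_i\rangle+\tfrac{\rho_i}{2}\big(\|X^{k+1}_i-Z+Y^{pX,k}_i\|^2+\|Z-X^{k+1}_i+Y^{nX,k}_i\|^2\big)+\tfrac{\tau^k}{2}\|Z-Z^k\|^2\Big)$. (U3) For each $c\in\mathcal C$, $Y^{c,k+1}_i$ is the minimizer over $Y\in[0,u^c_{Y_i}]$ of $\langle\mu^{c,k}_i,r^c_i(X^{k+1}_i,Z^{k+1},Y)\rangle+\tfrac{\rho_i}{2}\|r^c_i(X^{k+1}_i,Z^{k+1},Y)\|^2+\tfrac{\gamma^{c,k}_i}{2}\|Y-Y^{c,k}_i\|^2$, where $r^c_i(X_i,Z,Y)$ denotes the residual $r^c_i$ with $Y^c_i=Y$. Dual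 descent rule (D): given positive scalars $\alpha^c_i$ and positive dual upper-bound vectors $u^c_{\mu_i}$, set, with $r^{c,k+1}_i:=r^c_i(X^{k+1}_i,Z^{k+1},Y^{c,k+1}_i)$, $\mu^{c,k+1}_i:=\mu^{c,k}_i-\alpha^{c,k+1}_i\,r^{c,k+1}_i$, where $\alpha^{c,k+1}_i$ is the diagonal matrix with entries $\alpha^{c,k+1}_{i,j}=\alpha^c_i$ if $\mu^{c,k}_{i,j}-\alpha^c_i(r^{c,k+1}_i)_j\in[0,(u^c_{\mu_i})_j]$ and $\alpha^{c,k+1}_{i,j}=0$ otherwise. *)

From HB Require Import structures.
From mathcomp Require Import all_boot all_order all_algebra.
Import Order.TTheory GRing.Theory Num.Theory.
Local Open Scope ring_scope.

Section Vec.
Variable R : realFieldType.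

Definition dot {m : nat} (u v : 'I_m -> R) : R := \sum_(j < m) u j * v j.
Definition sqn {m : nat} (u : 'I_m -> R) : R := \sum_(j < m) u j ^+ 2.
Definition vsub {m : nat} (u v : 'I_m -> R) : 'I_m -> R := fun j => u j - v j.

Record affine (n : nat) := Affine { aff_w : 'I_n -> R ; aff_c : R }.
Arguments aff_w {n}.
Arguments aff_c {n}.
Definition aff_eval {n : nat} (a : affine n) (x : 'I_n -> R) : R :=
  dot (aff_w a) x + aff_c a.

Inductive qcomp (n : nat) :=
  | QSum of affine n & affine n
  | QDiff of affine n & affine n & affine n.

Definition qeval {n : nat} (q : qcomp n) (x : 'I_n -> R) : R :=
  match q with
  | QSum a c => aff_eval a x + (aff_eval c x) ^+ 2
  | QDiff c a b => (aff_eval c x) ^+ 2 - aff_eval a x * aff_eval b x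
  end.

Definition qgrad {n : nat} (q : qcomp n) (x : 'I_n -> R) : 'I_n -> R :=
  fun d => match q with
  | QSum a c => aff_w a d + 2 * aff_eval c x * aff_w c d
  | QDiff c a b => 2 * aff_eval c x * aff_w c d
                   - (aff_w a d * aff_eval b x + aff_eval a x * aff_w b d)
  end.
End Vec.
Arguments dot {R m}.
Arguments sqn {R m}.
Arguments vsub {R m}.
Arguments aff_w {R n}.
Arguments aff_c {R n}.
Arguments aff_eval {R n}.
Arguments qeval {R n}.
Arguments qgrad {R n}.
Arguments QSum {R n}.
Arguments QDiff {R n}.

Inductive ctype := cpX | cnX | cF | cG | cpH | cnH.
Definition call : seq ctype := [:: cpX; cnX; cF; cG; cpH; cnH].

Definition dimc0 (n N : nat) (p q s : 'I_N -> nat) (i : 'I_N) (c : ctype) : nat :=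
  match c with
  | cpX | cnX => n
  | cF => p i
  | cG => q i
  | cpH | cnH => s i
  end.

Record problem (R : realFieldType) := Problem {
  pn : nat;
  pN : nat;
  pM : nat;
  blk : 'I_pn -> 'I_pM;           (* coordinate j belongs to subvector blk j *)
  ub : 'I_pn -> R;
  f0 : 'I_pn -> R;                (* f(Z) = <f0, Z> *)
  pp : 'I_pN -> nat;
  pq : 'I_pN -> nat;
  ps : 'I_pN -> nat;
  Fc : forall i : 'I_pN, 'I_(pp i) -> qcomp R pn;
  Gm : forall i : 'I_pN, 'I_(pq i) -> 'I_pn -> R;
  G0 : forall i : 'I_pN, 'I_(pq i) -> R;
  Hm : forall i : 'I_pN, 'I_(ps i) -> 'I_pn -> R;
  H0 : forall i : 'I_pN, 'I_(ps i) -> R;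
  rho : 'I_pN -> R;
  uY : forall (i : 'I_pN) (c : ctype), 'I_(dimc0 pn pN pp pq ps i c) -> R;
  umu : forall (i : 'I_pN) (c : ctype), 'I_(dimc0 pn pN pp pq ps i c) -> R;
  alpha : 'I_pN -> ctype -> R
}.

Arguments pn {R}.
Arguments pN {R}.
Arguments pM {R}.
Arguments blk {R}.
Arguments ub {R}.
Arguments f0 {R}.
Arguments pp {R}.
Arguments pq {R}.
Arguments ps {R}.
Arguments Fc {R}.
Arguments Gm {R}.
Arguments G0 {R}.
Arguments Hm {R}.
Arguments H0 {R}.
Arguments rho {R}.
Arguments uY {R}.
Arguments umu {R}.
Arguments alpha {R}.

Section Algo.
Variable R : realFieldType.
Variable P : problem R.
Local Notation n := (pn P).
Local Notation N := (pN P).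
Local Notation M := (pM P).

Definition dimc (i : 'I_N) (c : ctype) : nat := dimc0 n N (pp P) (pq P) (ps P) i c.
Definition Yfam (i : 'I_N) := forall c : ctype, 'I_(dimc i c) -> R.

Definition inbox (x : 'I_n -> R) : Prop := forall j, - ub P j <= x j <= ub P j.
Definition inboxl (l : 'I_M) (x : 'I_n -> R) : Prop :=
  forall j, blk P j = l -> - ub P j <= x j <= ub P j.
Definition inYbox (i : 'I_N) (c : ctype) (y : 'I_(dimc i c) -> R) : Prop :=
  forall j, 0 <= y j <= uY P i c j.
Definition inMubox (i : 'I_N) (c : ctype) (y : 'I_(dimc i c) -> R) : Prop :=
  forall j, 0 <= y j <= umu P i c j.

Definition Fval (i : 'I_N) (x : 'I_n -> R) : 'I_(pp P i) -> R :=
  fun j => qeval (Fc P i j) x.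
Definition Glin (i : 'I_N) (x : 'I_n -> R) : 'I_(pq P i) -> R :=
  fun j => \sum_(d < n) Gm P i j d * x d.
Definition Hlin (i : 'I_N) (x : 'I_n -> R) : 'I_(ps P i) -> R :=
  fun j => \sum_(d < n) Hm P i j d * x d.
Definition Gval (i : 'I_N) (x : 'I_n -> R) : 'I_(pq P i) -> R :=
  fun j => Glin i x j + G0 P i j.
Definition Hval (i : 'I_N) (x : 'I_n -> R) : 'I_(ps P i) -> R :=
  fun j => Hlin i x j + H0 P i j.

Definition resb (i : 'I_N) (c : ctype) (X Z : 'I_n -> R) : 'I_(dimc i c) -> R :=
  match c as c0 return 'I_(dimc i c0) -> R with
  | cpX => fun j => X j - Z j
  | cnX => fun j => Z j - X j
  | cF => Fval i X
  | cG => Gval i X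
  | cpH => Hval i X
  | cnH => fun j => - Hval i X j
  end.
Definition res (i : 'I_N) (c : ctype) (X Z : 'I_n -> R) (y : 'I_(dimc i c) -> R)
  : 'I_(dimc i c) -> R := fun j => resb i c X Z j + y j.

Definition Li (i : 'I_N) (X Z : 'I_n -> R) (Y mu : Yfam i) : R :=
  dot (f0 P) X
  + \sum_(c <- call) dot (mu c) (res i c X Z (Y c))
  + rho P i / 2 * \sum_(c <- call) sqn (res i c X Z (Y c)).

Definition rstr (l : 'I_M) (x : 'I_n -> R) : 'I_n -> R :=
  fun j => if blk P j == l then x j else 0.
Definition bupd (V : 'I_n -> R) (l : 'I_M) (W : 'I_n -> R) : 'I_n -> R :=
  fun j => if blk P j == l then W j else V j.
(* X^{k+1,k}_{i,l} : blocks < l from X1, blocks >= l from X0 *)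
Definition gs_lt (X1 X0 : 'I_n -> R) (l : 'I_M) : 'I_n -> R :=
  fun j => if (blk P j < l)%N then X1 j else X0 j.
(* X^{k+1,k+1}_{i,l} : blocks <= l from X1, blocks > l from X0 *)
Definition gs_le (X1 X0 : 'I_n -> R) (l : 'I_M) : 'I_n -> R :=
  fun j => if (blk P j <= l)%N then X1 j else X0 j.
Definition norm1l (l : 'I_M) (x : 'I_n -> R) : R :=
  \sum_(j < n | blk P j == l) `|x j|.
Definition sqnl (l : 'I_M) (x : 'I_n -> R) : R :=
  \sum_(j < n | blk P j == l) x j ^+ 2.

Variables (X : nat -> 'I_N -> 'I_n -> R) (Z : nat -> 'I_n -> R)
          (Y : nat -> forall i : 'I_N, Yfam i) (mu : nat -> forall i : 'I_N, Yfam i).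
Variables (sigma1 sigma2 : nat -> 'I_N -> 'I_M -> R) (tau : nat -> R)
          (gamma : nat -> 'I_N -> ctype -> R).

(* objective of (U1) at a full vector W *)
Definition objX (k : nat) (i : 'I_N) (l : 'I_M) (W : 'I_n -> R) : R :=
  Li i W (Z k) (Y k i) (mu k i)
  + sigma1 k i l * norm1l l (vsub W (X k i))
  + sigma2 k i l / 2 * sqnl l (vsub W (X k i)).

Definition objZ (k : nat) (W : 'I_n -> R) : R :=
  \sum_(i < N)
    ( dot (mu k i cpX) (res i cpX (X k.+1 i) W (Y k i cpX))
    + dot (mu k i cnX) (res i cnX (X k.+1 i) W (Y k i cnX))
    + rho P i / 2 * (sqn (res i cpX (X k.+1 i) W (Y k i cpX))
                     + sqn (res i cnX (X k.+1 i) W (Y k i cnX)))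
    + tau k / 2 * sqn (vsub W (Z k)) ).

Definition objY (k : nat) (i : 'I_N) (c : ctype) (y : 'I_(dimc i c) -> R) : R :=
  dot (mu k i c) (res i c (X k.+1 i) (Z k.+1) y)
  + rho P i / 2 * sqn (res i c (X k.+1 i) (Z k.+1) y)
  + gamma k i c / 2 * sqn (vsub y (Y k i c)).

Definition rk (k : nat) (i : 'I_N) (c : ctype) : 'I_(dimc i c) -> R :=
  res i c (X k i) (Z k) (Y k i c).

(* alpha^{c,k}_{i,j} for k >= 1 (rule (D), uses mu^{k-1} and r^{c,k}) *)
Definition alph (k : nat) (i : 'I_N) (c : ctype) (j : 'I_(dimc i c)) : R :=
  let v := mu k.-1 i c j - alpha P i c * rk k i c j in
  if (0 <= v) && (v <= umu P i c j) then alpha P i c else 0.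

Definition Lk (k : nat) : R := \sum_(i < N) Li i (X k i) (Z k) (Y k i) (mu k i).

Definition Pk (k : nat) : R :=
  \sum_(i < N)
   ( \sum_(l < M) sigma2 k i l * sqnl l (vsub (X k.+1 i) (X k i))
   + rho P i * sqn (vsub (X k.+1 i) (X k i))
   + (tau k + rho P i) * sqn (vsub (Z k.+1) (Z k))
   + \sum_(c <- call) (gamma k i c + rho P i / 2) * sqn (vsub (Y k.+1 i c) (Y k i c))
   + rho P i / 2 * \sum_(l < M)
        ( sqn (vsub (Fval i (gs_le (X k.+1 i) (X k i) l))
                    (Fval i (gs_lt (X k.+1 i) (X k i) l)))
        + sqn (Glin i (rstr l (vsub (X k.+1 i) (X k i))))
        + 2 * sqn (Hlin i (rstr l (vsub (X k.+1 i) (X k i)))) ) ).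

Definition Uk (k : nat) (i : 'I_N) (l : 'I_M) : R :=
  let Xle := gs_le (X k.+1 i) (X k i) l in
  let Xlt := gs_lt (X k.+1 i) (X k i) l in
  dot (fun j => mu k i cF j + rho P i * (Fval i Xle j + Y k i cF j))
      (fun j => Fval i Xlt j - Fval i Xle j
                - dot (qgrad (Fc P i j) Xle) (rstr l (vsub (X k i) (X k.+1 i)))).

End Algo.
Arguments dimc {R}.
Arguments Yfam {R}.
Arguments inbox {R}.
Arguments inboxl {R}.
Arguments inYbox {R}.
Arguments inMubox {R}.
Arguments Fval {R}.
Arguments Glin {R}.
Arguments Hlin {R}.
Arguments Gval {R}.
Arguments Hval {R}.
Arguments resb {R}.
Arguments res {R}.
Arguments Li {R}.
Arguments rstr {R}.
Arguments bupd {R}.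
Arguments gs_lt {R}.
Arguments gs_le {R}.
Arguments norm1l {R}.
Arguments sqnl {R}.
Arguments objX {R}.
Arguments objZ {R}.
Arguments objY {R}.
Arguments rk {R}.
Arguments alph {R}.
Arguments Lk {R}.
Arguments Pk {R}.
Arguments Uk {R}.

From HB Require Import structures.
From mathcomp Require Import all_boot all_order all_algebra.
From mathcomp Require Import ring lra.
From Stdlib Require Import FunctionalExtensionality.
Import Order.TTheory GRing.Theory Num.Theory.
Local Open Scope ring_scope.

(* Each primal update minimises its objective over a box that also contains the
   previous iterate, so the minimiser is no worse than any point of the segment
   back to that iterate.  Along the segment the augmented Lagrangian is a
   polynomial in the segment parameter (of degree four for an [X]-block, two for
   [Z] and the slacks); letting the parameter tend to 0 shows that its linear
   coefficient dominates the proximal terms, and the higher coefficients are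
   exactly the quadratic terms of [Pk] and, for the nonconvex [F]-constraints,
   the linearisation error [Uk].  The projected dual step lowers the Lagrangian
   by exactly [sum alpha |r|^2].  Telescoping over the Gauss-Seidel sweep and
   then over the iterations gives the bound. *)

Section Segment.
Context {R : realFieldType}.

Lemma segment_in_itv (lo hi a b t : R) :
  lo <= a <= hi -> lo <= b <= hi -> 0 <= t <= 1 -> lo <= a + t * (b - a) <= hi.
Proof. by move=> /andP[? ?] /andP[? ?] /andP[? ?]; apply/andP; split; nra. Qed.

(* If [a < 0], then [t := - a / (2 B - a)], with [B] a bound of the bracket on
   [(0, 1]], makes the polynomial negative. *)
Lemma lin_coef_ge0 (a b c e : R) :
  (forall t, 0 < t -> t <= 1 -> 0 <= t * a + t ^+ 2 * (b + t * c + t ^+ 2 * e)) ->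
  0 <= a.
Proof.
move=> H; rewrite leNgt; apply/negP => a_lt0.
set B := `|b| + `|c| + `|e| + 1.
have B_gt0 : 0 < B by rewrite /B; have := normr_ge0 b; have := normr_ge0 c;
  have := normr_ge0 e; lra.
set t := - a / (2 * B - a).
have t_gt0 : 0 < t by rewrite /t divr_gt0 // ?oppr_gt0 //; lra.
have tE : t * (2 * B - a) = - a by rewrite /t divfK // gt_eqF //; lra.
have t_le1 : t <= 1 by nra.
have bracket_le : b + t * c + t ^+ 2 * e <= B.
  have hc : t * c <= `|c|.
    apply: (le_trans (ler_norm _)); rewrite normrM gtr0_norm //.
    have := normr_ge0 c; nra.
  have he : t ^+ 2 * e <= `|e|.
    apply: (le_trans (ler_norm _)); rewrite normrM normrX gtr0_norm //.
    by apply: ler_piMl; [exact: normr_ge0 | rewrite expr2; nra].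
  by have := ler_norm b; rewrite /B; lra.
have := H t t_gt0 t_le1.
have : t ^+ 2 * (b + t * c + t ^+ 2 * e) <= t ^+ 2 * B.
  by rewrite ler_pM2l // exprn_gt0.
have -> : t ^+ 2 * B = t * ((- a + t * a) / 2) by rewrite expr2 -mulrA; congr (_ * _); lra.
have : t * (t * a) < 0 by rewrite pmulr_rlt0 // pmulr_rlt0.
have : t * a < 0 by rewrite pmulr_rlt0.
nra.
Qed.

Lemma prox_slope_ge (a q s S : R) :
  (forall t, 0 < t -> t <= 1 ->
     s / 2 * S <= t * a + t ^+ 2 * q + s / 2 * ((1 - t) ^+ 2 * S)) ->
  s * S <= a.
Proof.
move=> H; rewrite -subr_ge0.
apply: (@lin_coef_ge0 _ (q + s / 2 * S) 0 0) => t t_gt0 t_le1.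
by have := H t t_gt0 t_le1; lra.
Qed.

Lemma dot_addZr m (u a b : 'I_m -> R) t :
  dot u (fun j => a j + t * b j) = dot u a + t * dot u b.
Proof. by rewrite /dot mulr_sumr -big_split; apply: eq_bigr => j _ /=; ring. Qed.

Lemma dot_addZ2r m (u a b c : 'I_m -> R) t :
  dot u (fun j => a j + t * b j + t ^+ 2 * c j)
  = dot u a + t * dot u b + t ^+ 2 * dot u c.
Proof. by rewrite /dot !mulr_sumr -!big_split; apply: eq_bigr => j _ /=; ring. Qed.

Lemma sqn_addZ m (a b : 'I_m -> R) t :
  sqn (fun j => a j + t * b j) = sqn a + t * (2 * dot a b) + t ^+ 2 * sqn b.
Proof.
rewrite /dot /sqn !mulr_sumr -!big_split /=.
by apply: eq_bigr => j _; ring.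
Qed.

Lemma sqn_addZ2 m (a b c : 'I_m -> R) t :
  sqn (fun j => a j + t * b j + t ^+ 2 * c j)
  = sqn a + t * (2 * dot a b) + t ^+ 2 * (sqn b + 2 * dot a c)
    + t ^+ 3 * (2 * dot b c) + t ^+ 4 * sqn c.
Proof.
rewrite /dot /sqn; transitivity (\sum_(j < m)
  (a j ^+ 2 + t * (2 * (a j * b j)) + t ^+ 2 * (b j ^+ 2 + 2 * (a j * c j))
   + t ^+ 3 * (2 * (b j * c j)) + t ^+ 4 * c j ^+ 2)).
  by apply: eq_bigr => j _; ring.
by rewrite !big_split /= -!mulr_sumr !big_split /= -!mulr_sumr.
Qed.

Lemma sqnN m (a : 'I_m -> R) : sqn (fun j => - a j) = sqn a.
Proof. by apply: eq_bigr => j _; rewrite sqrrN. Qed.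

Lemma dotr0 m (u : 'I_m -> R) : dot u (fun=> 0) = 0.
Proof. by rewrite /dot big1 // => j _; rewrite mulr0. Qed.

Lemma sqn0 m : sqn (fun _ : 'I_m => 0 : R) = 0.
Proof. by rewrite /sqn big1 // => j _; rewrite expr0n. Qed.

End Segment.

Section GaussSeidel.
Context {R : realFieldType}.
Variable P : problem R.
Local Notation vec := ('I_(pn P) -> R).

Lemma bupd_gs_lt (X1 X0 : vec) (l : 'I_(pM P)) :
  bupd P (gs_lt P X1 X0 l) l X1 = gs_le P X1 X0 l.
Proof.
apply: functional_extensionality => j; rewrite /bupd /gs_lt /gs_le.
case: eqP => [-> | /eqP ne]; first by rewrite leqnn.
by case: ltngtP => // eq_l; case/eqP: ne; apply: ord_inj.
Qed.

Lemma gs_lt_gs_le (X1 X0 : vec) (l : 'I_(pM P)) :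
  gs_lt P X1 X0 l = (fun j => gs_le P X1 X0 l j + rstr P l (vsub X0 X1) j).
Proof.
apply: functional_extensionality => j; rewrite /gs_lt /gs_le /rstr /vsub.
case: eqP => [-> | /eqP ne]; first by rewrite ltnn leqnn; ring.
by case: ltngtP => // eq_l; [ring | ring | case/eqP: ne; apply: ord_inj].
Qed.

Lemma bupd_gs_lt_segment (X1 X0 : vec) (l : 'I_(pM P)) (t : R) :
  bupd P (gs_lt P X1 X0 l) l (fun j => X1 j + t * (X0 j - X1 j))
  = (fun j => gs_le P X1 X0 l j + t * rstr P l (vsub X0 X1) j).
Proof.
rewrite -bupd_gs_lt; apply: functional_extensionality => j.
by rewrite /bupd /rstr /vsub; case: eqP => _; ring.
Qed.

Lemma rstr_vsubC (X1 X0 : vec) (l : 'I_(pM P)) :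
  rstr P l (vsub X0 X1) = (fun j => - rstr P l (vsub X1 X0) j).
Proof.
apply: functional_extensionality => j.
by rewrite /rstr /vsub; case: ifP => _; ring.
Qed.

Lemma norm1l_bupd (V W X0 : vec) (l : 'I_(pM P)) :
  norm1l P l (vsub (bupd P V l W) X0) = norm1l P l (vsub W X0).
Proof. by apply: eq_bigr => j /eqP jl; rewrite /vsub /bupd jl eqxx. Qed.

Lemma sqnl_bupd (V W X0 : vec) (l : 'I_(pM P)) :
  sqnl P l (vsub (bupd P V l W) X0) = sqnl P l (vsub W X0).
Proof. by apply: eq_bigr => j /eqP jl; rewrite /vsub /bupd jl eqxx. Qed.

Lemma norm1l_vsubC (X1 X0 : vec) (l : 'I_(pM P)) :
  norm1l P l (vsub X1 X0) = norm1l P l (vsub X0 X1).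
Proof. by apply: eq_bigr => j _; rewrite /vsub distrC. Qed.

Lemma norm1l_segment (X1 X0 : vec) (l : 'I_(pM P)) (t : R) : 0 <= t <= 1 ->
  norm1l P l (vsub (fun j => X1 j + t * (X0 j - X1 j)) X0) = (1 - t) * norm1l P l (vsub X1 X0).
Proof.
move=> /andP[_ t_le1]; rewrite /norm1l mulr_sumr; apply: eq_bigr => j _.
rewrite /vsub -[1 - t]ger0_norm ?subr_ge0 // -normrM; congr `|_|; ring.
Qed.

Lemma sqnl_segment (X1 X0 : vec) (l : 'I_(pM P)) (t : R) :
  sqnl P l (vsub (fun j => X1 j + t * (X0 j - X1 j)) X0)
  = (1 - t) ^+ 2 * sqnl P l (vsub X1 X0).
Proof. by rewrite /sqnl mulr_sumr; apply: eq_bigr => j _; rewrite /vsub; ring. Qed.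

Lemma sum_sqn_rstr (v : vec) : \sum_(l < pM P) sqn (rstr P l v) = sqn v.
Proof.
rewrite /sqn exchange_big /=; apply: eq_bigr => j _.
rewrite (bigD1 (blk P j)) //= big1 ?addr0; first by rewrite /rstr eqxx.
by move=> l /negbTE ne; rewrite /rstr eq_sym ne expr0n.
Qed.

Lemma gs_telescope (f : vec -> R) (X1 X0 : vec) :
  \sum_(l < pM P) (f (gs_lt P X1 X0 l) - f (gs_le P X1 X0 l)) = f X0 - f X1.
Proof.
pose g (m : nat) := - f (fun j => if (blk P j < m)%N then X1 j else X0 j).
transitivity (\sum_(l < pM P) (g l.+1 - g l)).
  apply: eq_bigr => l _; rewrite /g.
  have -> : gs_le P X1 X0 l = fun j => if (blk P j < l.+1)%N then X1 j else X0 j.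
    by apply: functional_extensionality => j; rewrite /gs_le ltnS.
  by rewrite /gs_lt opprK addrC.
rewrite -(big_mkord xpredT (fun m => g m.+1 - g m)) telescope_sumr // /g.
have -> : (fun j => if (blk P j < 0)%N then X1 j else X0 j) = X0.
  by apply: functional_extensionality => j; rewrite ltn0.
have -> : (fun j => if (blk P j < pM P)%N then X1 j else X0 j) = X1.
  by apply: functional_extensionality => j; rewrite ltn_ord.
by rewrite opprK addrC.
Qed.

End GaussSeidel.

Section Block.
Context {R : realFieldType}.
Variables (P : problem R) (i : 'I_(pN P)).
Local Notation vec := ('I_(pn P) -> R).

Lemma aff_eval_addZ (a : affine R (pn P)) (x d : vec) t :
  aff_eval a (fun j => x j + t * d j) = aff_eval a x + t * dot (aff_w a) d.
Proof. by rewrite /aff_eval dot_addZr; ring. Qed.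

Definition qcurv (q : qcomp R (pn P)) (d : vec) : R :=
  match q with
  | QSum _ c => dot (aff_w c) d ^+ 2
  | QDiff c a b => dot (aff_w c) d ^+ 2 - dot (aff_w a) d * dot (aff_w b) d
  end.

Lemma qeval_addZ (q : qcomp R (pn P)) (x d : vec) t :
  qeval q (fun j => x j + t * d j)
  = qeval q x + t * dot (qgrad q x) d + t ^+ 2 * qcurv q d.
Proof.
case: q => [a c | c a b] /=; rewrite !aff_eval_addZ.
- have -> : dot (qgrad (QSum a c) x) d
            = dot (aff_w a) d + 2 * aff_eval c x * dot (aff_w c) d.
    by rewrite /dot mulr_sumr -big_split; apply: eq_bigr => j _ /=; ring.
  by ring.
- have -> : dot (qgrad (QDiff c a b) x) d
            = 2 * aff_eval c x * dot (aff_w c) d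
              - (dot (aff_w a) d * aff_eval b x + aff_eval a x * dot (aff_w b) d).
    rewrite /dot !mulr_sumr !mulr_suml -big_split -sumrN -big_split.
    by apply: eq_bigr => j _ /=; ring.
  by ring.
Qed.

Lemma Glin_addZ (x d : vec) t j :
  Glin P i (fun j => x j + t * d j) j = Glin P i x j + t * Glin P i d j.
Proof. by rewrite /Glin mulr_sumr -big_split; apply: eq_bigr => k _ /=; ring. Qed.

Lemma Hlin_addZ (x d : vec) t j :
  Hlin P i (fun j => x j + t * d j) j = Hlin P i x j + t * Hlin P i d j.
Proof. by rewrite /Hlin mulr_sumr -big_split; apply: eq_bigr => k _ /=; ring. Qed.

Lemma sqn_GlinN (v : vec) : sqn (Glin P i (fun j => - v j)) = sqn (Glin P i v).
Proof.
rewrite /sqn; apply: eq_bigr => j _; rewrite /Glin -sqrrN -sumrN.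
by congr (_ ^+ 2); apply: eq_bigr => k _; rewrite mulrN opprK.
Qed.

Lemma sqn_HlinN (v : vec) : sqn (Hlin P i (fun j => - v j)) = sqn (Hlin P i v).
Proof.
rewrite /sqn; apply: eq_bigr => j _; rewrite /Hlin -sqrrN -sumrN.
by congr (_ ^+ 2); apply: eq_bigr => k _; rewrite mulrN opprK.
Qed.

Definition res_slope (c : ctype) (x d : vec) : 'I_(dimc P i c) -> R :=
  match c as c0 return 'I_(dimc P i c0) -> R with
  | cpX => fun j => d j
  | cnX => fun j => - d j
  | cF => fun j => dot (qgrad (Fc P i j) x) d
  | cG => Glin P i d
  | cpH => Hlin P i d
  | cnH => fun j => - Hlin P i d j
  end.

Definition res_curv (c : ctype) (d : vec) : 'I_(dimc P i c) -> R :=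
  match c as c0 return 'I_(dimc P i c0) -> R with
  | cF => fun j => qcurv (Fc P i j) d
  | _ => fun _ => 0
  end.

Lemma res_addZ c (x Z d : vec) (y : 'I_(dimc P i c) -> R) t j :
  res P i c (fun j => x j + t * d j) Z y j
  = res P i c x Z y j + t * res_slope c x d j + t ^+ 2 * res_curv c d j.
Proof.
move: y j; case: c => y j; rewrite /res /=.
- by ring.
- by ring.
- by rewrite /Fval qeval_addZ; ring.
- by rewrite /Gval Glin_addZ; ring.
- by rewrite /Hval Hlin_addZ; ring.
- by rewrite /Hval Hlin_addZ; ring.
Qed.

Definition Li_d1 (x Z d : vec) (Y mu : Yfam P i) : R :=
  dot (f0 P) d + \sum_(c <- call) dot (mu c) (res_slope c x d)
  + rho P i * \sum_(c <- call) dot (res P i c x Z (Y c)) (res_slope c x d).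
Definition Li_d2 (x Z d : vec) (Y mu : Yfam P i) : R :=
  \sum_(c <- call) dot (mu c) (res_curv c d)
  + rho P i / 2 * (\sum_(c <- call) sqn (res_slope c x d)
                   + 2 * \sum_(c <- call) dot (res P i c x Z (Y c)) (res_curv c d)).
Definition Li_d3 (x d : vec) : R :=
  rho P i * \sum_(c <- call) dot (res_slope c x d) (res_curv c d).
Definition Li_d4 (d : vec) : R := rho P i / 2 * \sum_(c <- call) sqn (res_curv c d).

Lemma Li_addZ (x Z d : vec) (Y mu : Yfam P i) t :
  Li P i (fun j => x j + t * d j) Z Y mu
  = Li P i x Z Y mu + t * Li_d1 x Z d Y mu
    + t ^+ 2 * (Li_d2 x Z d Y mu + t * Li_d3 x d + t ^+ 2 * Li_d4 d).
Proof.
have res_line c : res P i c (fun j => x j + t * d j) Z (Y c)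
   = fun j => res P i c x Z (Y c) j + t * res_slope c x d j + t ^+ 2 * res_curv c d j.
  by apply: functional_extensionality => j; rewrite res_addZ.
rewrite /Li dot_addZr.
under eq_bigr => c _ do rewrite res_line dot_addZ2r.
under [X in _ + _ * X]eq_bigr => c _ do rewrite res_line sqn_addZ2.
rewrite !big_split /= -!mulr_sumr big_split /= -mulr_sumr.
by rewrite /Li_d1 /Li_d2 /Li_d3 /Li_d4; field.
Qed.

Lemma sum_sqn_res_slope (x d : vec) :
  \sum_(c <- call) sqn (res_slope c x d)
  = 2 * sqn d + sqn (res_slope cF x d) + sqn (Glin P i d) + 2 * sqn (Hlin P i d).
Proof.
rewrite /call !big_cons big_nil.
have -> : sqn (res_slope cnX x d) = sqn d := sqnN _ d.
have -> : sqn (res_slope cnH x d) = sqn (Hlin P i d) := sqnN _ (Hlin P i d).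
rewrite /=; ring.
Qed.

(* The [F]-part of the remainder is the linearisation error of [F] along [d]. *)
Lemma Li_add_sub_d1 (x Z d : vec) (Y mu : Yfam P i) :
  Li P i (fun j => x j + d j) Z Y mu - Li P i x Z Y mu - Li_d1 x Z d Y mu
  = dot (fun j => mu cF j + rho P i * (Fval P i x j + Y cF j))
        (fun j => Fval P i (fun j => x j + d j) j - Fval P i x j
                  - dot (qgrad (Fc P i j) x) d)
    + rho P i / 2 * (2 * sqn d + sqn (vsub (Fval P i x) (Fval P i (fun j => x j + d j)))
                     + sqn (Glin P i d) + 2 * sqn (Hlin P i d)).
Proof.
have -> : (fun j => x j + d j) = (fun j => x j + 1 * d j).
  by apply: functional_extensionality => j; rewrite mul1r.
rewrite Li_addZ /Li_d2 /Li_d3 /Li_d4 sum_sqn_res_slope /call !big_cons !big_nil.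
rewrite !dotr0 !sqn0.
have -> : dot (fun j => mu cF j + rho P i * (Fval P i x j + Y cF j))
    (fun j => Fval P i (fun j => x j + 1 * d j) j - Fval P i x j - dot (qgrad (Fc P i j) x) d)
  = dot (mu cF) (res_curv cF d) + rho P i * dot (res P i cF x Z (Y cF)) (res_curv cF d).
  rewrite /dot mulr_sumr -big_split; apply: eq_bigr => j _.
  by rewrite /res /= /Fval qeval_addZ -/(dot (qgrad (Fc P i j) x) d); ring.
have -> : sqn (vsub (Fval P i x) (Fval P i (fun j => x j + 1 * d j)))
  = sqn (res_slope cF x d) + 2 * dot (res_slope cF x d) (res_curv cF d)
    + sqn (res_curv cF d).
  rewrite /sqn /dot mulr_sumr -!big_split; apply: eq_bigr => j _.
  by rewrite /vsub /= /Fval qeval_addZ; ring.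
lra.
Qed.

Lemma Li_block_descent (Z0 : vec) (Y0 mu0 : Yfam P i) (X1 X0 : vec) (l : 'I_(pM P))
    (s1 s2 : R) :
  inboxl P l X1 -> inboxl P l X0 ->
  (forall W, inboxl P l W ->
     Li P i (bupd P (gs_lt P X1 X0 l) l X1) Z0 Y0 mu0
       + s1 * norm1l P l (vsub (bupd P (gs_lt P X1 X0 l) l X1) X0)
       + s2 / 2 * sqnl P l (vsub (bupd P (gs_lt P X1 X0 l) l X1) X0)
     <= Li P i (bupd P (gs_lt P X1 X0 l) l W) Z0 Y0 mu0
       + s1 * norm1l P l (vsub (bupd P (gs_lt P X1 X0 l) l W) X0)
       + s2 / 2 * sqnl P l (vsub (bupd P (gs_lt P X1 X0 l) l W) X0)) ->
  s1 * norm1l P l (vsub X0 X1)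
    + dot (fun j => mu0 cF j + rho P i * (Fval P i (gs_le P X1 X0 l) j + Y0 cF j))
          (fun j => Fval P i (gs_lt P X1 X0 l) j - Fval P i (gs_le P X1 X0 l) j
                - dot (qgrad (Fc P i j) (gs_le P X1 X0 l)) (rstr P l (vsub X0 X1)))
    + s2 * sqnl P l (vsub X1 X0)
    + rho P i * sqn (rstr P l (vsub X1 X0))
    + rho P i / 2 * ( sqn (vsub (Fval P i (gs_le P X1 X0 l)) (Fval P i (gs_lt P X1 X0 l)))
        + sqn (Glin P i (rstr P l (vsub X1 X0)))
        + 2 * sqn (Hlin P i (rstr P l (vsub X1 X0))))
  <= Li P i (gs_lt P X1 X0 l) Z0 Y0 mu0 - Li P i (gs_le P X1 X0 l) Z0 Y0 mu0.
Proof.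
move=> X1_in X0_in X1_opt.
set xle := gs_le P X1 X0 l; set d := rstr P l (vsub X0 X1).
have slope_ge : s1 * norm1l P l (vsub X0 X1) + s2 * sqnl P l (vsub X1 X0)
                <= Li_d1 xle Z0 d Y0 mu0.
  rewrite -subr_ge0.
  apply: (@lin_coef_ge0 _ _ (Li_d2 xle Z0 d Y0 mu0 + s2 / 2 * sqnl P l (vsub X1 X0))
                             (Li_d3 xle d) (Li_d4 d)) => t t_gt0 t_le1.
  have t01 : 0 <= t <= 1 by rewrite t_le1 ltW.
  have seg_in : inboxl P l (fun j => X1 j + t * (X0 j - X1 j)).
    by move=> j jl; apply: segment_in_itv => //; [exact: X1_in | exact: X0_in].
  have := X1_opt _ seg_in.
  rewrite !norm1l_bupd !sqnl_bupd bupd_gs_lt bupd_gs_lt_segment Li_addZ.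
  rewrite norm1l_segment // sqnl_segment (norm1l_vsubC P X1 X0) -/xle -/d.
  lra.
have := Li_add_sub_d1 xle Z0 d Y0 mu0.
rewrite -gs_lt_gs_le -/xle.
have dN : d = fun j => - rstr P l (vsub X1 X0) j := rstr_vsubC P X1 X0 l.
have -> : sqn d = sqn (rstr P l (vsub X1 X0)) by rewrite dN sqnN.
have -> : sqn (Glin P i d) = sqn (Glin P i (rstr P l (vsub X1 X0))).
  by rewrite dN sqn_GlinN.
have -> : sqn (Hlin P i d) = sqn (Hlin P i (rstr P l (vsub X1 X0))).
  by rewrite dN sqn_HlinN.
lra.
Qed.

Definition Lres c (x Z : vec) (y m : 'I_(dimc P i c) -> R) : R :=
  dot m (res P i c x Z y) + rho P i / 2 * sqn (res P i c x Z y).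

Lemma Li_sub_slack (x Z : vec) (Y0 Y1 mu : Yfam P i) :
  Li P i x Z Y0 mu - Li P i x Z Y1 mu
  = \sum_(c <- call) (Lres c x Z (Y0 c) (mu c) - Lres c x Z (Y1 c) (mu c)).
Proof. by rewrite /Li /Lres sumrB !big_split /= -!mulr_sumr; ring. Qed.

Lemma Lres_slack_descent c (x Z : vec) (y1 y0 m : 'I_(dimc P i c) -> R) (g : R) :
  inYbox P i c y1 -> inYbox P i c y0 ->
  (forall y, inYbox P i c y ->
     Lres c x Z y1 m + g / 2 * sqn (vsub y1 y0) <= Lres c x Z y m + g / 2 * sqn (vsub y y0)) ->
  (g + rho P i / 2) * sqn (vsub y1 y0) <= Lres c x Z y0 m - Lres c x Z y1 m.
Proof.
move=> y1_in y0_in y1_opt.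
set D := vsub y0 y1; set S := sqn (vsub y1 y0).
set a := dot m D + rho P i * dot (res P i c x Z y1) D.
have sqnD : sqn D = S.
  by rewrite /D /S /sqn; apply: eq_bigr => j _; rewrite /vsub -sqrrN opprB.
have Lres_seg t : Lres c x Z (fun j => y1 j + t * D j) m
                  = Lres c x Z y1 m + t * a + t ^+ 2 * (rho P i / 2 * S).
  rewrite /Lres; have -> : res P i c x Z (fun j => y1 j + t * D j)
            = fun j => res P i c x Z y1 j + t * D j.
    by apply: functional_extensionality => j; rewrite /res; ring.
  by rewrite dot_addZr sqn_addZ sqnD /a; field.
have slope_ge : g * S <= a.
  apply: (@prox_slope_ge _ _ (rho P i / 2 * S)) => t t_gt0 t_le1.
  have t01 : 0 <= t <= 1 by rewrite t_le1 ltW.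
  have seg_in : inYbox P i c (fun j => y1 j + t * D j).
    by move=> j; apply: segment_in_itv; [exact: y1_in | exact: y0_in | exact: t01].
  have := y1_opt _ seg_in; rewrite Lres_seg -/S.
  have -> : sqn (vsub (fun j => y1 j + t * D j) y0) = (1 - t) ^+ 2 * S.
    by rewrite /S /sqn mulr_sumr; apply: eq_bigr => j _; rewrite /D /vsub; ring.
  lra.
have -> : y0 = fun j => y1 j + 1 * D j.
  by apply: functional_extensionality => j; rewrite /D /vsub; ring.
rewrite Lres_seg; lra.
Qed.

Lemma Li_sub_dual (x Z : vec) (Y mu0 mu1 : Yfam P i) :
  Li P i x Z Y mu0 - Li P i x Z Y mu1
  = \sum_(c <- call) dot (fun j => mu0 c j - mu1 c j) (res P i c x Z (Y c)).
Proof.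
have -> : \sum_(c <- call) dot (fun j => mu0 c j - mu1 c j) (res P i c x Z (Y c))
   = \sum_(c <- call) dot (mu0 c) (res P i c x Z (Y c))
     - \sum_(c <- call) dot (mu1 c) (res P i c x Z (Y c)).
  rewrite -sumrB; apply: eq_bigr => c _.
  by rewrite /dot -sumrB; apply: eq_bigr => j _; ring.
rewrite /Li; ring.
Qed.

(* The [Z]-dependent part of [Li], in the shape of the objective of (U2). *)
Definition LiZ (x Z : vec) (Y mu : Yfam P i) : R :=
  dot (mu cpX) (res P i cpX x Z (Y cpX)) + dot (mu cnX) (res P i cnX x Z (Y cnX))
  + rho P i / 2 * (sqn (res P i cpX x Z (Y cpX)) + sqn (res P i cnX x Z (Y cnX))).

Lemma Li_sub_LiZ (x Z0 Z1 : vec) (Y mu : Yfam P i) :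
  Li P i x Z0 Y mu - Li P i x Z1 Y mu = LiZ x Z0 Y mu - LiZ x Z1 Y mu.
Proof. by rewrite /Li /LiZ /call !big_cons !big_nil; ring. Qed.

Definition LiZ_slope (x Z1 Z0 : vec) (Y mu : Yfam P i) : R :=
  dot (mu cpX) (fun j => - (Z0 j - Z1 j)) + dot (mu cnX) (fun j => Z0 j - Z1 j)
  + rho P i * (dot (res P i cpX x Z1 (Y cpX)) (fun j => - (Z0 j - Z1 j))
               + dot (res P i cnX x Z1 (Y cnX)) (fun j => Z0 j - Z1 j)).

Lemma LiZ_segment (x Z1 Z0 : vec) (Y mu : Yfam P i) t :
  LiZ x (fun j => Z1 j + t * (Z0 j - Z1 j)) Y mu
  = LiZ x Z1 Y mu + t * LiZ_slope x Z1 Z0 Y mu + t ^+ 2 * (rho P i * sqn (vsub Z1 Z0)).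
Proof.
rewrite /LiZ /LiZ_slope.
have -> : res P i cpX x (fun j => Z1 j + t * (Z0 j - Z1 j)) (Y cpX)
   = fun j => res P i cpX x Z1 (Y cpX) j + t * - (Z0 j - Z1 j).
  by apply: functional_extensionality => j; rewrite /res /=; ring.
have -> : res P i cnX x (fun j => Z1 j + t * (Z0 j - Z1 j)) (Y cnX)
   = fun j => res P i cnX x Z1 (Y cnX) j + t * (Z0 j - Z1 j).
  by apply: functional_extensionality => j; rewrite /res /=; ring.
rewrite !dot_addZr !sqn_addZ.
have -> : sqn (fun j : 'I_(dimc P i cpX) => - (Z0 j - Z1 j)) = sqn (vsub Z1 Z0).
  by apply: eq_bigr => j _; rewrite /vsub; ring.
have -> : sqn (fun j : 'I_(dimc P i cnX) => Z0 j - Z1 j) = sqn (vsub Z1 Z0).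
  by apply: eq_bigr => j _; rewrite /vsub; ring.
by field.
Qed.

Lemma LiZ_endpoint (x Z1 Z0 : vec) (Y mu : Yfam P i) :
  LiZ x Z0 Y mu = LiZ x Z1 Y mu + LiZ_slope x Z1 Z0 Y mu + rho P i * sqn (vsub Z1 Z0).
Proof.
have {1}-> : Z0 = fun j => Z1 j + 1 * (Z0 j - Z1 j).
  by apply: functional_extensionality => j; ring.
by rewrite LiZ_segment mul1r expr1n mul1r.
Qed.

End Block.

Lemma Li_consensus_descent {R : realFieldType} (P : problem R)
    (X1 : 'I_(pN P) -> 'I_(pn P) -> R) (Z1 Z0 : 'I_(pn P) -> R)
    (Y mu : forall i, Yfam P i) (tau : R) :
  inbox P Z1 -> inbox P Z0 ->
  (forall W, inbox P W ->
    \sum_(i < pN P) (LiZ P i (X1 i) Z1 (Y i) (mu i) + tau / 2 * sqn (vsub Z1 Z0))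
    <= \sum_(i < pN P) (LiZ P i (X1 i) W (Y i) (mu i) + tau / 2 * sqn (vsub W Z0))) ->
  \sum_(i < pN P) (tau + rho P i) * sqn (vsub Z1 Z0)
  <= \sum_(i < pN P) (Li P i (X1 i) Z0 (Y i) (mu i) - Li P i (X1 i) Z1 (Y i) (mu i)).
Proof.
move=> Z1_in Z0_in Z1_opt.
set S := sqn (vsub Z1 Z0).
set A := \sum_(i < pN P) LiZ_slope P i (X1 i) Z1 Z0 (Y i) (mu i).
set Q := \sum_(i < pN P) rho P i * S.
have sum_const (u : R) : \sum_(i < pN P) u = u * (pN P)%:R.
  by rewrite sumr_const card_ord mulr_natr.
have slope_ge : tau * (pN P)%:R * S <= A.
  apply: (@prox_slope_ge _ _ Q) => t t_gt0 t_le1.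
  have seg_in : inbox P (fun j => Z1 j + t * (Z0 j - Z1 j)).
    by move=> j; apply: segment_in_itv; [exact: Z1_in | exact: Z0_in | rewrite t_le1 ltW].
  have := Z1_opt _ seg_in.
  have -> : sqn (vsub (fun j => Z1 j + t * (Z0 j - Z1 j)) Z0) = (1 - t) ^+ 2 * S.
    by rewrite /S /sqn mulr_sumr; apply: eq_bigr => j _; rewrite /vsub; ring.
  under [X in _ <= X]eq_bigr => i _ do rewrite LiZ_segment.
  rewrite !big_split /= !sum_const -!mulr_sumr -/A -/Q -/S.
  lra.
rewrite (eq_bigr (fun i => tau * S + rho P i * S)) => [|i _]; last by ring.
rewrite [X in _ <= X](eq_bigr (fun i => LiZ_slope P i (X1 i) Z1 Z0 (Y i) (mu i) + rho P i * S))
  => [|i _]; last by rewrite Li_sub_LiZ (LiZ_endpoint P i (X1 i) Z1 Z0) -/S; lra.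
rewrite big_split [X in _ <= X]big_split /= sum_const -/A -/Q.
lra.
Qed.

Lemma sum_descent {R : realFieldType} (L a : nat -> R) (K : nat) :
  (forall k, L k.+1 + a k <= L k) -> L K + \sum_(k < K) a k <= L 0%N.
Proof.
move=> step; elim: K => [|K IH]; first by rewrite big_ord0 addr0.
by rewrite big_ord_recr /=; have := step K; lra.
Qed.

Section Iterates.
Context {R : realFieldType}.
Variable P : problem R.
Variables (X : nat -> 'I_(pN P) -> 'I_(pn P) -> R) (Z : nat -> 'I_(pn P) -> R)
  (Y mu : nat -> forall i : 'I_(pN P), Yfam P i)
  (sigma1 sigma2 : nat -> 'I_(pN P) -> 'I_(pM P) -> R) (tau : nat -> R)
  (gamma : nat -> 'I_(pN P) -> ctype -> R).
Hypothesis X0_in : forall i, inbox P (X 0%N i).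
Hypothesis Z0_in : inbox P (Z 0%N).
Hypothesis Y0_in : forall i c, inYbox P i c (Y 0%N i c).
Hypothesis X_opt : forall k i l,
  inboxl P l (X k.+1 i) /\
  forall W : 'I_(pn P) -> R, inboxl P l W ->
    objX P X Z Y mu sigma1 sigma2 k i l (bupd P (gs_lt P (X k.+1 i) (X k i) l) l (X k.+1 i))
    <= objX P X Z Y mu sigma1 sigma2 k i l (bupd P (gs_lt P (X k.+1 i) (X k i) l) l W).
Hypothesis Z_opt : forall k, inbox P (Z k.+1) /\
  forall W : 'I_(pn P) -> R, inbox P W ->
    objZ P X Z Y mu tau k (Z k.+1) <= objZ P X Z Y mu tau k W.
Hypothesis Y_opt : forall k i c, inYbox P i c (Y k.+1 i c) /\
  forall y : 'I_(dimc P i c) -> R, inYbox P i c y ->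
    objY P X Z Y mu gamma k i c (Y k.+1 i c) <= objY P X Z Y mu gamma k i c y.
Hypothesis mu_step : forall k i c j,
  mu k.+1 i c j = mu k i c j - alph P X Z Y mu k.+1 i c j * rk P X Z Y k.+1 i c j.

Lemma X_inboxl k i l : inboxl P l (X k i).
Proof. by case: k => [|k]; [move=> j _; exact: X0_in | exact: (X_opt k i l).1]. Qed.

Lemma Z_inbox k : inbox P (Z k).
Proof. by case: k => [|k]; [exact: Z0_in | exact: (Z_opt k).1]. Qed.

Lemma Y_inYbox k i c : inYbox P i c (Y k i c).
Proof. by case: k => [|k]; [exact: Y0_in | exact: (Y_opt k i c).1]. Qed.

Lemma Li_primal_descent k i :
  \sum_(l < pM P) (sigma1 k i l * norm1l P l (vsub (X k i) (X k.+1 i)) + Uk P X Y mu k i l)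
  + \sum_(l < pM P) sigma2 k i l * sqnl P l (vsub (X k.+1 i) (X k i))
  + rho P i * sqn (vsub (X k.+1 i) (X k i))
  + rho P i / 2 * \sum_(l < pM P)
      ( sqn (vsub (Fval P i (gs_le P (X k.+1 i) (X k i) l))
                  (Fval P i (gs_lt P (X k.+1 i) (X k i) l)))
      + sqn (Glin P i (rstr P l (vsub (X k.+1 i) (X k i))))
      + 2 * sqn (Hlin P i (rstr P l (vsub (X k.+1 i) (X k i)))) )
  <= Li P i (X k i) (Z k) (Y k i) (mu k i) - Li P i (X k.+1 i) (Z k) (Y k i) (mu k i).
Proof.
have := gs_telescope P (fun x => Li P i x (Z k) (Y k i) (mu k i)) (X k.+1 i) (X k i).
move=> /= <-.
apply: le_trans (ler_sum _ (fun l _ => Li_block_descent P i (Z k) (Y k i) (mu k i)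
  (X k.+1 i) (X k i) l (sigma1 k i l) (sigma2 k i l)
  (X_opt k i l).1 (X_inboxl k i l) (X_opt k i l).2)).
rewrite -sum_sqn_rstr !mulr_sumr -!big_split /=.
by apply: ler_sum => l _; rewrite /Uk; lra.
Qed.

Lemma Li_slack_descent k i :
  \sum_(c <- call) (gamma k i c + rho P i / 2) * sqn (vsub (Y k.+1 i c) (Y k i c))
  <= Li P i (X k.+1 i) (Z k.+1) (Y k i) (mu k i)
     - Li P i (X k.+1 i) (Z k.+1) (Y k.+1 i) (mu k i).
Proof.
rewrite Li_sub_slack; apply: ler_sum => c _.
apply: Lres_slack_descent; [exact: (Y_opt k i c).1 | exact: Y_inYbox | exact: (Y_opt k i c).2].
Qed.

Lemma Li_dual_step k i :
  \sum_(c <- call) \sum_(j < dimc P i c)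
     alph P X Z Y mu k.+1 i c j * `|rk P X Z Y k.+1 i c j| ^+ 2
  = Li P i (X k.+1 i) (Z k.+1) (Y k.+1 i) (mu k i)
    - Li P i (X k.+1 i) (Z k.+1) (Y k.+1 i) (mu k.+1 i).
Proof.
rewrite Li_sub_dual; apply: eq_bigr => c _; apply: eq_bigr => j _.
by rewrite mu_step real_normK ?num_real // /rk; ring.
Qed.

Lemma Lk_descent_step k :
  Lk P X Z Y mu k.+1
  + \sum_(i < pN P) \sum_(c <- call) \sum_(j < dimc P i c)
       alph P X Z Y mu k.+1 i c j * `|rk P X Z Y k.+1 i c j| ^+ 2
  + Pk P X Z Y sigma2 tau gamma k
  + \sum_(i < pN P) \sum_(l < pM P)
       (sigma1 k i l * norm1l P l (vsub (X k i) (X k.+1 i)) + Uk P X Y mu k i l)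
  <= Lk P X Z Y mu k.
Proof.
have Z_gain : 0 <= \sum_(i < pN P)
   (Li P i (X k.+1 i) (Z k) (Y k i) (mu k i) - Li P i (X k.+1 i) (Z k.+1) (Y k i) (mu k i)
    - (tau k + rho P i) * sqn (vsub (Z k.+1) (Z k))).
  rewrite sumrB subr_ge0.
  exact: Li_consensus_descent (Z_inbox k.+1) (Z_inbox k) (Z_opt k).2.
rewrite /Lk /Pk -!big_split /= -subr_ge0 -sumrB.
apply: le_trans Z_gain _.
apply: ler_sum => i _.
have := Li_primal_descent k i; have := Li_slack_descent k i; have := Li_dual_step k i.
lra.
Qed.

End Iterates.

Arguments Lk_descent_step {R P X Z Y mu sigma1 sigma2 tau gamma}.

Theorem lemma2 (R : realFieldType) (P : problem R)
  (X : nat -> 'I_(pN P) -> 'I_(pn P) -> R) (Z : nat -> 'I_(pn P) -> R)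
  (Y : nat -> forall i : 'I_(pN P), Yfam P i)
  (mu : nat -> forall i : 'I_(pN P), Yfam P i)
  (sigma1 sigma2 : nat -> 'I_(pN P) -> 'I_(pM P) -> R) (tau : nat -> R)
  (gamma : nat -> 'I_(pN P) -> ctype -> R)
  (Hu : forall j, 0 < ub P j)
  (Hrho : forall i, 0 < rho P i)
  (HuY : forall i c j, 0 < uY P i c j)
  (Humu : forall i c j, 0 < umu P i c j)
  (Halpha : forall i c, 0 < alpha P i c)
  (HFconv : forall i j (x y : 'I_(pn P) -> R) (t : R),
      inbox P x -> inbox P y -> 0 <= t <= 1 ->
      qeval (Fc P i j) (fun d => t * x d + (1 - t) * y d)
        <= t * qeval (Fc P i j) x + (1 - t) * qeval (Fc P i j) y)
  (Hs1 : forall k i l, 0 <= sigma1 k i l)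
  (Hs2 : forall k i l, 0 < sigma2 k i l)
  (Htau : forall k, 0 < tau k)
  (Hgamma : forall k i c, 0 < gamma k i c)
  (HX0 : forall i, inbox P (X 0%N i))
  (HZ0 : inbox P (Z 0%N))
  (HY0 : forall i c, inYbox P i c (Y 0%N i c))
  (Hmu0 : forall i c, inMubox P i c (mu 0%N i c))
  (HU1 : forall k i l,
      inboxl P l (X k.+1 i) /\
      forall W : 'I_(pn P) -> R, inboxl P l W ->
        objX P X Z Y mu sigma1 sigma2 k i l
             (bupd P (gs_lt P (X k.+1 i) (X k i) l) l (X k.+1 i))
        <= objX P X Z Y mu sigma1 sigma2 k i l
             (bupd P (gs_lt P (X k.+1 i) (X k i) l) l W))
  (HU2 : forall k, inbox P (Z k.+1) /\
      forall W : 'I_(pn P) -> R, inbox P W ->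
        objZ P X Z Y mu tau k (Z k.+1) <= objZ P X Z Y mu tau k W)
  (HU3 : forall k i c, inYbox P i c (Y k.+1 i c) /\
      forall y : 'I_(dimc P i c) -> R, inYbox P i c y ->
        objY P X Z Y mu gamma k i c (Y k.+1 i c) <= objY P X Z Y mu gamma k i c y)
  (HD : forall k i c j,
      mu k.+1 i c j = mu k i c j - alph P X Z Y mu k.+1 i c j * rk P X Z Y k.+1 i c j)
  (K : nat) :
  Lk P X Z Y mu 0%N >=
    Lk P X Z Y mu K
    + \sum_(i < pN P) \sum_(1 <= k < K.+1) \sum_(c <- call) \sum_(j < dimc P i c)
         alph P X Z Y mu k i c j * `|rk P X Z Y k i c j| ^+ 2
    + \sum_(k < K) Pk P X Z Y sigma2 tau gamma k
    + \sum_(i < pN P) \sum_(k < K) \sum_(l < pM P)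
         (sigma1 k i l * norm1l P l (vsub (X k i) (X k.+1 i)) + Uk P X Y mu k i l).
Proof.
pose a k := \sum_(i < pN P) \sum_(c <- call) \sum_(j < dimc P i c)
                alph P X Z Y mu k.+1 i c j * `|rk P X Z Y k.+1 i c j| ^+ 2
            + Pk P X Z Y sigma2 tau gamma k
            + \sum_(i < pN P) \sum_(l < pM P)
                (sigma1 k i l * norm1l P l (vsub (X k i) (X k.+1 i)) + Uk P X Y mu k i l).
have step k : Lk P X Z Y mu k.+1 + a k <= Lk P X Z Y mu k.
  by rewrite /a !addrA; exact: Lk_descent_step HX0 HZ0 HY0 HU1 HU2 HU3 HD k.
under eq_bigr => i _ do rewrite big_add1 /= big_mkord.
rewrite exchange_big [X in _ + X <= _]exchange_big.
have := sum_descent _ a K step; rewrite /a !big_split /=.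
lra.
Qed.
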